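(* Assume (A1). Let $\delta>0$, $\beta>0$, and $\mathcal R=\{r_1,\dots,r_m\}$ with positive integers $r_1<\dots<r_m\le t$. Suppose the event $E$ described in the context holds. Then for every $1\le k\le m-1$, $$\lVert\hat{\bm C}^{[r_k]}(t)-\hat{\bm C}^{[r_{k+1}]}(t)\rVert_\infty\le\mathcal T(k)\ \Longrightarrow\ \mathcal B(r_{k+1})\le\mathcal B(r_k).$$
   Context: For matrices $\lVert\bm M\rVert_\infty=\max_{i,j}|M_{ij}|$. Let $\ell_1,\dots,\ell_n:\mathbb{R}^d\to\{-1,1\}$ be functions and $X_1,X_2,\dots$ random inputs with $X_k\sim D_k$; (A1): for every finite $t$, $(X_1,\dots,X_t)\sim\prod_{k=1}^tD_k$. Correlation matrix $C_{ij}(k)=\mathbb{E}_{X\sim D_k}[\ell_i(X)\ell_j(X)]$; $\bm C^{[r]}(t)=\frac1r\sum_{k=t-r+1}^t\bm C(k)$; $\hat{\bm C}^{[r]}(t)=\frac1r\sum_{k=t-r+1}^t\bm v_k\bm v_k^T$ with $\bm v_k=(\ell_1(X_k),\dots,\ell_n(X_k))^T$. Let $A_{\delta,n,m}=\sqrt{2\ln[(2m-1)n(n-1)/\delta]}$ and $\gamma_M=\max_{1\le k\le m-1}\sqrt{r_k/r_{k+1}}$. Define $\mathcal B(r)=\frac{A_{\delta,n,m}}{\sqrt r}\cdot\frac{2\beta+2}{1-\gamma_M}+\lVert\bm C(t)-\bm C^{[r]}(t)\rVert_\infty$ and, for $k\le m-1$, $\mathcal T(k)=\frac{2\beta A_{\delta,n,m}}{\sqrt{r_k}}+A_{\delta,n,m}\sqrt{\frac{1-r_k/r_{k+1}}{r_k}}$.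 The event $E$: for all $k\le m$, $\lVert\bm C(t)-\hat{\bm C}^{[r_k]}(t)\rVert_\infty\le\frac{A_{\delta,n,m}}{\sqrt{r_k}}+\lVert\bm C(t)-\bm C^{[r_k]}(t)\rVert_\infty$, and for all $k\le m-1$, $\lVert\bm C^{[r_k]}(t)-\bm C^{[r_{k+1}]}(t)-\hat{\bm C}^{[r_k]}(t)+\hat{\bm C}^{[r_{k+1}]}(t)\rVert_\infty\le A_{\delta,n,m}\sqrt{\frac{1-r_k/r_{k+1}}{r_k}}$. *)

From HB Require Import structures.
From mathcomp Require Import all_boot all_order all_algebra.
From mathcomp Require Import all_classical all_reals all_analysis.
Set Implicit Arguments. Unset Strict Implicit. Unset Printing Implicit Defensive.
Import Order.TTheory GRing.Theory Num.Theory.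
Local Open Scope classical_set_scope.
Local Open Scope ring_scope.

(* Inputs live in R^d, represented as d.-tuple R with the product sigma-algebra. *)

Definition supnorm (R : realType) (n : nat) (M : 'M[R]_n) : R :=
  \big[Num.max/0]_(i < n) \big[Num.max/0]_(j < n) `|M i j|.

(* (A1): for every finite t, (X_1,...,X_t) ~ D_1 x ... x D_t, i.e. the joint law
   of (X_1,...,X_t) is the product of the marginal laws D_k (tested on all
   measurable rectangles, which determine the product measure). *)
Definition assumption_A1 (R : realType) (dO : measure_display) (Omega : measurableType dO)
  (P : probability Omega R) (d : nat)
  (X : nat -> {mfun Omega >-> d.-tuple R}) : Prop :=
  forall (t : nat) (B : nat -> set (d.-tuple R)),
    (forall k, measurable (B k)) ->
    P (\bigcap_(k in [set k | (1 <= k <= t)%N]) (X k @^-1` B k))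
    = (\prod_(1 <= k < t.+1) P (X k @^-1` B k))%E.

Definition Cmat (R : realType) (dO : measure_display) (Omega : measurableType dO)
  (P : probability Omega R) (d n : nat) (l : 'I_n -> d.-tuple R -> R)
  (X : nat -> {mfun Omega >-> d.-tuple R}) (k : nat) : 'M[R]_n :=
  \matrix_(i, j) fine (\int[distribution P (X k)]_x (l i x * l j x)%:E).

Definition Cbar (R : realType) (dO : measure_display) (Omega : measurableType dO)
  (P : probability Omega R) (d n : nat) (l : 'I_n -> d.-tuple R -> R)
  (X : nat -> {mfun Omega >-> d.-tuple R}) (r t : nat) : 'M[R]_n :=
  r%:R^-1 *: \sum_((t - r).+1 <= k < t.+1) Cmat P l X k.

Definition vvec (R : realType) (dO : measure_display) (Omega : measurableType dO)
  (d n : nat) (l : 'I_n -> d.-tuple R -> R)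
  (X : nat -> {mfun Omega >-> d.-tuple R}) (k : nat) (w : Omega) : 'cV[R]_n :=
  \col_i l i (X k w).

Definition Chat (R : realType) (dO : measure_display) (Omega : measurableType dO)
  (d n : nat) (l : 'I_n -> d.-tuple R -> R)
  (X : nat -> {mfun Omega >-> d.-tuple R}) (r t : nat) (w : Omega) : 'M[R]_n :=
  r%:R^-1 *: \sum_((t - r).+1 <= k < t.+1) (vvec l X k w *m (vvec l X k w)^T).

Definition Aconst (R : realType) (delta : R) (n m : nat) : R :=
  Num.sqrt (2 * ln (((2 * m - 1)%N%:R * n%:R * (n%:R - 1)) / delta)).

(* gamma_M = max_{1<=k<=m-1} sqrt(r_k / r_{k+1}) ; r indexed 1..m *)
Definition gammaM (R : realType) (r : nat -> nat) (m : nat) : R :=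
  \big[Num.max/0]_(1 <= k < m) Num.sqrt ((r k)%:R / (r k.+1)%:R).

Definition Bfun (R : realType) (dO : measure_display) (Omega : measurableType dO)
  (P : probability Omega R) (d n : nat) (l : 'I_n -> d.-tuple R -> R)
  (X : nat -> {mfun Omega >-> d.-tuple R})
  (delta beta : R) (rs : nat -> nat) (m t : nat) (r : nat) : R :=
  Aconst delta n m / Num.sqrt r%:R * ((2 * beta + 2) / (1 - gammaM R rs m))
  + supnorm (Cmat P l X t - Cbar P l X r t).

Definition Tfun (R : realType) (delta beta : R) (n : nat) (rs : nat -> nat) (m k : nat) : R :=
  2 * beta * Aconst delta n m / Num.sqrt (rs k)%:R
  + Aconst delta n m * Num.sqrt ((1 - (rs k)%:R / (rs k.+1)%:R) / (rs k)%:R).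

Definition eventE (R : realType) (dO : measure_display) (Omega : measurableType dO)
  (P : probability Omega R) (d n : nat) (l : 'I_n -> d.-tuple R -> R)
  (X : nat -> {mfun Omega >-> d.-tuple R})
  (delta : R) (rs : nat -> nat) (m t : nat) (w : Omega) : Prop :=
  (forall k, (1 <= k <= m)%N ->
     supnorm (Cmat P l X t - Chat l X (rs k) t w)
       <= Aconst delta n m / Num.sqrt (rs k)%:R
          + supnorm (Cmat P l X t - Cbar P l X (rs k) t)) /\
  (forall k, (1 <= k <= m - 1)%N ->
     supnorm (Cbar P l X (rs k) t - Cbar P l X (rs k.+1) t
              - Chat l X (rs k) t w + Chat l X (rs k.+1) t w)
       <= Aconst delta n m * Num.sqrt ((1 - (rs k)%:R / (rs k.+1)%:R) / (rs k)%:R)).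

From HB Require Import structures.
From mathcomp Require Import all_boot all_order all_algebra.
From mathcomp Require Import all_classical all_reals all_analysis.
From mathcomp Require Import ring lra zify.
Import Order.TTheory GRing.Theory Num.Theory.
Local Open Scope classical_set_scope.
Local Open Scope ring_scope.

(* Write S_k for the bias ||C(t) - C^[r_k](t)||.  Splitting C(t) - C^[r_{k+1}]
   through C^[r_k] and the empirical estimates, the second clause of E and the
   test bound S_{k+1} - S_k by (2 beta + 2) A/sqrt r_k.  On the other hand the
   variance term of B drops by
     A c (1/sqrt r_k - 1/sqrt r_{k+1}) = A c (1 - sqrt(r_k/r_{k+1}))/sqrt r_k,
   with c = (2 beta + 2)/(1 - gamma_M), and this is at least (2 beta + 2) A/sqrt r_k
   because sqrt(r_k/r_{k+1}) <= gamma_M < 1. *)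

Section SupNorm.
Context {R : realType} {n : nat}.
Implicit Types M N : 'M[R]_n.

Lemma supnorm_ge0 M : 0 <= supnorm M.
Proof.
apply: (big_ind (fun x => 0 <= x)) => // [x y x0 _|i _]; first by rewrite le_max x0.
by apply: (big_ind (fun x => 0 <= x)) => // x y x0 _; rewrite le_max x0.
Qed.

Lemma ler_supnorm M i j : `|M i j| <= supnorm M.
Proof.
apply: le_trans (le_bigmax _ _ i).
exact: (le_bigmax _ (fun j => `|M i j|) j).
Qed.

Lemma supnorm_le M c : 0 <= c -> (forall i j, `|M i j| <= c) -> supnorm M <= c.
Proof. by move=> c0 Mc; apply: bigmax_le => // i _; apply: bigmax_le. Qed.

Lemma supnormD M N : supnorm (M + N) <= supnorm M + supnorm N.
Proof.
apply: supnorm_le => [|i j]; first by rewrite addr_ge0 ?supnorm_ge0.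
by rewrite mxE (le_trans (ler_normD _ _)) // lerD ?ler_supnorm.
Qed.

Lemma supnorm_sub_split M C1 C2 H1 H2 :
  supnorm (M - C2)
    <= supnorm (M - C1) + supnorm (C1 - C2 - H1 + H2) + supnorm (H1 - H2).
Proof.
have -> : M - C2 = (M - C1) + (C1 - C2 - H1 + H2) + (H1 - H2).
  by rewrite !addrA subrK -(addrA _ H2) (addrC H2) addrA subrK addrK.
by rewrite (le_trans (supnormD _ _)) // lerD2r supnormD.
Qed.

Lemma supnorm_bias_increment M C1 C2 H1 H2 (A beta s w : R) :
  supnorm (C1 - C2 - H1 + H2) <= A * w ->
  supnorm (H1 - H2) <= 2 * beta * A / s + A * w ->
  0 <= A -> w <= s^-1 ->
  supnorm (M - C2) <= supnorm (M - C1) + (2 * beta + 2) * A / s.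
Proof.
move=> dev test A0 w_le; have Aw_le := ler_wpM2l A0 w_le.
apply: le_trans (supnorm_sub_split M C1 C2 H1 H2) _.
rewrite -addrA lerD2l (le_trans (lerD dev test)) //.
have -> : (2 * beta + 2) * A / s = 2 * beta * A / s + (A / s + A / s) by ring.
by rewrite addrCA lerD2l; apply: lerD.
Qed.

End SupNorm.

Section GammaM.
Variables (R : realType) (rs : nat -> nat) (m : nat).

Lemma le_gammaM k : (1 <= k < m)%N ->
  Num.sqrt ((rs k)%:R / (rs k.+1)%:R) <= gammaM R rs m.
Proof.
move=> km; pose F k := Num.sqrt ((rs k)%:R / (rs k.+1)%:R : R).
by apply: (le_bigmax_seq _ _ xpredT F); rewrite ?mem_index_iota.
Qed.

Lemma gammaM_lt1 : (forall k, (1 <= k < m)%N -> (rs k < rs k.+1)%N) -> gammaM R rs m < 1.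
Proof.
move=> rs_incr; rewrite /gammaM big_nat_cond.
elim/big_rec: _ => // k x /andP[km _] x_lt1.
have rsSk_gt0 : (0 < rs k.+1)%N by apply: leq_ltn_trans (rs_incr k km).
rewrite gt_max x_lt1 andbT -[X in _ < X]sqrtr1 ltr_sqrt //.
by rewrite ltr_pdivrMr ?ltr0n // mul1r ltr_nat rs_incr.
Qed.

End GammaM.

Lemma rs_gt0 (rs : nat -> nat) m :
  (0 < rs 1)%N -> (forall k, (1 <= k < m)%N -> (rs k < rs k.+1)%N) ->
  forall k, (1 <= k <= m)%N -> (0 < rs k)%N.
Proof.
move=> rs1_gt0 rs_incr [//|[//|k]] /andP[_ km].
exact: leq_ltn_trans (leq0n _) (rs_incr k.+1 km).
Qed.

Section SqrtBounds.
Context {R : rcfType}.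

Lemma sqrt_subr_div_le (x a : R) : 0 <= x -> 0 < a ->
  Num.sqrt ((1 - x) / a) <= (Num.sqrt a)^-1.
Proof.
move=> x0 a0; rewrite -sqrtrV; last exact: ltW.
apply: ler_wsqrtr.
by apply: ler_piMl; rewrite ?gerBl // invr_ge0 ltW.
Qed.

Lemma invsqrt_ratio (a b : R) : 0 < a -> 0 < b ->
  (Num.sqrt b)^-1 = Num.sqrt (a / b) / Num.sqrt a.
Proof.
move=> a0 b0; rewrite sqrtrM ?ltW // sqrtrV ?ltW // mulrAC divff ?mul1r //.
by rewrite gt_eqF ?sqrtr_gt0.
Qed.

Lemma bias_variance_tradeoff (A K g a b S1 S2 : R) :
  0 <= A -> 0 <= K -> 0 < a -> 0 < b -> Num.sqrt (a / b) <= g -> g < 1 ->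
  S2 <= S1 + K * A / Num.sqrt a ->
  A / Num.sqrt b * (K / (1 - g)) + S2 <= A / Num.sqrt a * (K / (1 - g)) + S1.
Proof.
move=> A0 K0 a0 b0 pg g1 S21; rewrite (invsqrt_ratio a) //.
have K_le : K <= K / (1 - g) * (1 - Num.sqrt (a / b)).
  by rewrite mulrAC ler_pdivlMr ?subr_gt0 // ler_wpM2l // lerD2l lerN2.
have sa_inv_ge0 : 0 <= (Num.sqrt a)^-1 by rewrite invr_ge0 sqrtr_ge0.
have := ler_wpM2l (mulr_ge0 A0 sa_inv_ge0) K_le.
lra.
Qed.

End SqrtBounds.

Theorem proposition7 (R : realType) (dO : measure_display) (Omega : measurableType dO)
  (P : probability Omega R) (d n : nat)
  (l : 'I_n -> d.-tuple R -> R)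
  (X : nat -> {mfun Omega >-> d.-tuple R})
  (delta beta : R) (rs : nat -> nat) (m t : nat) (w : Omega) :
  assumption_A1 P X ->
  (forall i, measurable_fun [set: d.-tuple R] (l i)) ->
  (forall i x, l i x = 1 \/ l i x = -1) ->
  0 < delta -> 0 < beta ->
  (0 < rs 1)%N ->
  (forall k, (1 <= k < m)%N -> (rs k < rs k.+1)%N) ->
  (rs m <= t)%N ->
  eventE P l X delta rs m t w ->
  forall k, (1 <= k <= m - 1)%N ->
    supnorm (Chat l X (rs k) t w - Chat l X (rs k.+1) t w) <= Tfun delta beta n rs m k ->
    Bfun P l X delta beta rs m t (rs k.+1) <= Bfun P l X delta beta rs m t (rs k).
Proof.
move=> _ _ _ _ beta_gt0 rs1_gt0 rs_incr _ [_ E_dev] k km1 test.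
have km : (1 <= k < m)%N by lia.
have rk_gt0 : (0 < (rs k)%:R :> R) by rewrite ltr0n (@rs_gt0 rs m rs1_gt0 rs_incr); lia.
have rSk_gt0 : (0 < (rs k.+1)%:R :> R) by rewrite (lt_trans rk_gt0) // ltr_nat rs_incr.
rewrite /Bfun; apply: bias_variance_tradeoff => //.
- exact: sqrtr_ge0.
- by rewrite addr_ge0 // mulr_ge0 // ltW.
- exact: le_gammaM.
- exact: gammaM_lt1.
apply: supnorm_bias_increment.
- exact: E_dev.
- exact: test.
- exact: sqrtr_ge0.
- by rewrite sqrt_subr_div_le // divr_ge0 // ltW.
Qed.
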